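(* Let $R$ be a ring, let $\zeta:Q_{0}\to Q_{1}$ be a homomorphism between injective right $R$-modules, let $\zeta^\bullet$ be the complex with $Q_0$ in degree $0$, $Q_1$ in degree $1$ and differential $\zeta$, and let $X^{\bullet}$ be an object of $\mathrm{K}(R)$. Then: (a) If $\mathrm{Hom}_{\mathrm{K}(R)}(X^{\bullet},\zeta^{\bullet})=0$, then $\mathrm{Hom}_{\mathrm{D}(R)}(\tau^{\leq 0}(X^{\bullet}),\zeta^\bullet[i])=0$ for all integers $i\le 0$; (b) If $\mathrm{Hom}_{\mathrm{K}(R)}(X^{\bullet},\zeta^{\bullet}[1])=0$, then $\mathrm{Hom}_{\mathrm{D}(R)}(\tau^{\geq 0}(X^{\bullet}),\zeta^\bullet[i])=0$ for all integers $i\ge 1$.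
   Context: $R$ is a unital associative ring, modules are right $R$-modules, $\mathrm{K}(R)$ and $\mathrm{D}(R)$ are the unbounded homotopy and derived categories of $\mathrm{Mod}(R)$. For a complex $X^\bullet=(X_i,d_i)$, the truncations are $\tau^{\le n}(X^\bullet):\cdots\to X_{n-2}\to X_{n-1}\to \mathrm{Ker}(d_n)\to 0\to\cdots$ and $\tau^{\ge n}(X^\bullet):\cdots\to 0\to X_n/\mathrm{Im}(d_{n-1})\xrightarrow{\overline{d_n}}X_{n+1}\to X_{n+2}\to\cdots$. *)

(* Right R-modules are modelled as "partial setoid" modules
   (carrier + partial equivalence relation), so that submodules (kernels) and
   quotient modules (cokernels) can be built without proof obligations.  *)
From HB Require Import structures.
From mathcomp Require Import all_boot all_order all_algebra.
Set Implicit Arguments. Unset Strict Implicit. Unset Printing Implicit Defensive.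
Import Order.TTheory GRing.Theory Num.Theory.
Local Open Scope ring_scope.

Section Modules.
Variable R : pzRingType.

Record rmod := RMod {
  car : Type;
  req : car -> car -> Prop;
  radd : car -> car -> car;
  rzero : car;
  ropp : car -> car;
  ract : car -> R -> car }.

(* the elements of M are the x with req x x *)
Definition elt (M : rmod) (x : car M) := req x x.

Definition is_rmod (M : rmod) : Prop :=
  (forall x y : car M, req x y -> req y x) /\
  (forall x y z : car M, req x y -> req y z -> req x z) /\
  elt (rzero M) /\
  (forall x x' y y' : car M, req x x' -> req y y' -> req (radd x y) (radd x' y')) /\
  (forall x x' : car M, req x x' -> req (ropp x) (ropp x')) /\
  (forall (x x' : car M) r, req x x' -> req (ract x r) (ract x' r)) /\
  (forall x y z : car M, elt x -> elt y -> elt z ->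
      req (radd x (radd y z)) (radd (radd x y) z)) /\
  (forall x y : car M, elt x -> elt y -> req (radd x y) (radd y x)) /\
  (forall x : car M, elt x -> req (radd (rzero M) x) x) /\
  (forall x : car M, elt x -> req (radd x (ropp x)) (rzero M)) /\
  (forall (x y : car M) r, elt x -> elt y ->
      req (ract (radd x y) r) (radd (ract x r) (ract y r))) /\
  (forall (x : car M) r s, elt x ->
      req (ract x (r + s)) (radd (ract x r) (ract x s))) /\
  (forall (x : car M) r s, elt x -> req (ract x (r * s)) (ract (ract x r) s)) /\
  (forall x : car M, elt x -> req (ract x 1) x).

Definition is_hom (M N : rmod) (f : car M -> car N) : Prop :=
  [/\ (forall x y, req x y -> req (f x) (f y)),
      (forall x y, elt x -> elt y -> req (f (radd x y)) (radd (f x) (f y))) &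
      (forall x r, elt x -> req (f (ract x r)) (ract (f x) r))].

Definition is_mono (M N : rmod) (f : car M -> car N) : Prop :=
  forall x y, elt x -> elt y -> req (f x) (f y) -> req x y.

Definition injective_mod (Q : rmod) : Prop :=
  forall (M N : rmod) (i : car M -> car N) (g : car M -> car Q),
    is_rmod M -> is_rmod N -> is_hom i -> is_mono i -> is_hom g ->
    exists h : car N -> car Q, is_hom h /\ forall x, elt x -> req (h (i x)) (g x).

Definition zero_mod : rmod :=
  @RMod unit (fun _ _ => True) (fun _ _ => tt) tt (fun _ => tt) (fun _ _ => tt).

(* complexes: differential d i j : X i -> X j, required to vanish unless j = i+1 *)
Record cplx := Cplx {
  cobj : int -> rmod;
  cdif : forall i j : int, car (cobj i) -> car (cobj j) }.
Arguments cobj c _ : clear implicits.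
Arguments cdif c i j _ : clear implicits.

Definition is_complex (X : cplx) : Prop :=
  [/\ (forall n, is_rmod (cobj X n)),
      (forall i j, is_hom (cdif X i j)),
      (forall i j (x : car (cobj X i)), j <> i + 1 -> elt x -> req (cdif X i j x) (rzero _)) &
      (forall i j k (x : car (cobj X i)), elt x -> req (cdif X j k (cdif X i j x)) (rzero _))].

Definition cmap (X Y : cplx) := forall n, car (cobj X n) -> car (cobj Y n).

Definition is_chain (X Y : cplx) (f : cmap X Y) : Prop :=
  (forall n, is_hom (f n)) /\
  (forall i j (x : car (cobj X i)), elt x -> req (f j (cdif X i j x)) (cdif Y i j (f i x))).

Definition null_homotopic (X Y : cplx) (f : cmap X Y) : Prop :=
  exists h : forall i j, car (cobj X i) -> car (cobj Y j),
    (forall i j, is_hom (h i j)) /\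
    forall n (x : car (cobj X n)), elt x ->
      req (f n x) (radd (cdif Y (n - 1) n (h n (n - 1) x)) (h (n + 1) n (cdif X n (n + 1) x))).

Definition cycle (X : cplx) n (x : car (cobj X n)) :=
  elt x /\ req (cdif X n (n + 1) x) (rzero _).

Definition boundary (X : cplx) n (x : car (cobj X n)) :=
  exists z : car (cobj X (n - 1)), elt z /\ req x (cdif X (n - 1) n z).

(* quasi-isomorphism: bijective on all cohomology modules *)
Definition quasi_iso (X Y : cplx) (s : cmap X Y) : Prop :=
  forall n,
    (forall y : car (cobj Y n), cycle y ->
       exists x : car (cobj X n), cycle x /\
         boundary (radd (s n x) (ropp y) : car (cobj Y n))) /\
    (forall x : car (cobj X n), cycle x -> boundary (s n x) -> boundary x).

Definition cmap_comp (X Y Z : cplx) (f : cmap Y Z) (t : cmap X Y) : cmap X Z :=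
  fun n x => f n (t n x).

Definition HomK_zero (X Y : cplx) : Prop :=
  forall f : cmap X Y, is_chain f -> null_homotopic f.

(* Hom_{D(R)}(A, B) = 0 : every morphism of D(R), i.e. every roof
   A <-s- A' -f-> B with s a quasi-isomorphism (the morphism f s^-1), is zero,
   i.e. f becomes zero after precomposing with some quasi-isomorphism. *)
Definition HomD_zero (A B : cplx) : Prop :=
  forall (A' : cplx) (s : cmap A' A) (f : cmap A' B),
    is_complex A' -> is_chain s -> is_chain f -> quasi_iso s ->
    exists (A'' : cplx) (t : cmap A'' A'),
      [/\ is_complex A'', is_chain t, quasi_iso t & null_homotopic (cmap_comp f t)].

Definition shift (X : cplx) (i : int) : cplx :=
  @Cplx (fun n => cobj X (n + i))
        (fun m n x => if odd `|i|%N then ropp (cdif X (m + i) (n + i) x)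
                      else cdif X (m + i) (n + i) x).

Definition restrict (M : rmod) (e : car M -> car M -> Prop) : rmod :=
  @RMod (car M) e (@radd M) (rzero M) (@ropp M) (@ract M).

(* tau^{<=0}: ... -> X_{-2} -> X_{-1} -> Ker d_0 -> 0 -> ... *)
Definition trunc_le0 (X : cplx) : cplx :=
  @Cplx (fun n => restrict (fun x y : car (cobj X n) =>
           let P := fun z : car (cobj X n) =>
             if n < 0 then True
             else if n == 0 then req (cdif X n (n + 1) z) (rzero _)
             else req z (rzero _) in
           [/\ req x y, P x & P y]))
        (cdif X).

(* tau^{>=0}: ... -> 0 -> X_0 / Im d_{-1} -> X_1 -> X_2 -> ... *)
Definition trunc_ge0 (X : cplx) : cplx :=
  @Cplx (fun n => restrict (fun x y : car (cobj X n) =>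
           if n < 0 then req x (rzero _) /\ req y (rzero _)
           else if n == 0 then
             [/\ elt x, elt y &
                 exists z : car (cobj X (n - 1)),
                   elt z /\ req (radd x (ropp y)) (cdif X (n - 1) n z)]
           else req x y))
        (cdif X).

Definition zeta_obj (Q0 Q1 : rmod) (n : int) : rmod :=
  match n with
  | Posz 0 => Q0
  | Posz 1 => Q1
  | _ => zero_mod
  end.

Definition zeta_dif (Q0 Q1 : rmod) (zeta : car Q0 -> car Q1) (i j : int) :
    car (zeta_obj Q0 Q1 i) -> car (zeta_obj Q0 Q1 j) :=
  match i as i0, j as j0
    return car (zeta_obj Q0 Q1 i0) -> car (zeta_obj Q0 Q1 j0) with
  | Posz 0, Posz 1 => zeta
  | _, j0 => fun _ => rzero (zeta_obj Q0 Q1 j0)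
  end.

Definition zeta_cplx (Q0 Q1 : rmod) (zeta : car Q0 -> car Q1) : cplx :=
  @Cplx (zeta_obj Q0 Q1) (zeta_dif zeta).

End Modules.

(* Everything reduces to null-homotopies of chain maps into a complex of injectives concentrated
   in two degrees p, p+1: such a homotopy is built degree by degree, extending maps along
   differentials by injectivity, as soon as the source is exact in degrees p and p+1.
   (a) As B ~ tau<=0 X has no cohomology in positive degrees, a roof tau<=0 X <- B -> zeta[i]
   may be restricted to tau<=0 B, which vanishes above degree 0; so for i < 0 there is nothing
   to do, and for i = 0 it suffices that f^0 kills the 0-cycles of B.  As B ~ tau<=0 X, f^0 induces phi : X^0/Im d^-1 -> Q0; injectivity of Q1
   extends zeta.phi along d^0, giving a chain map X -> zeta.  Its null-homotopy forces phi to
   vanish on the 0-cycles of X, which contain the image of the 0-cycles of B.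
   (b) If B ~ tau>=0 X, then B is exact in negative degrees, where zeta[i] lives; this settles
   i >= 2.  For i = 1 the homotopy exists in degree -1, and the obstruction in degree 0 again
   factors through X^0/Im d^-1; it gives a chain map X -> zeta[1], whose null-homotopy provides
   the correction of the homotopy in degree -1. *)

From Pilot Require Import Defs.
From mathcomp Require Import all_boot all_order all_algebra.
From mathcomp Require Import zify.
Set Implicit Arguments. Unset Strict Implicit. Unset Printing Implicit Defensive.
Import Order.TTheory GRing.Theory.
Local Open Scope ring_scope.

(* The module axioms of a carrier are found by instance search, which may not guess the carrier. *)
Existing Class is_rmod.
#[local] Hint Mode is_rmod - ! : typeclass_instances.

Local Notation dif X i j := (@cdif _ X i j).

Section RModTheory.
Context {R : pzRingType} {M : rmod R} {HM : is_rmod M}.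
Implicit Types x y z a b c d : car M.

Lemma req_sym x y : req x y -> req y x.
Proof. by case: HM => H _; exact: H. Qed.

Lemma req_trans x y z : req x y -> req y z -> req x z.
Proof. by case: HM => _ [H _]; exact: H. Qed.

Lemma elt0 : elt (rzero M).
Proof. by case: HM => _ [_ [H _]]. Qed.

Lemma req_add x x' y y' : req x x' -> req y y' -> req (radd x y) (radd x' y').
Proof. by case: HM => _ [_ [_ [H _]]]; exact: H. Qed.

Lemma req_opp x x' : req x x' -> req (ropp x) (ropp x').
Proof. by case: HM => _ [_ [_ [_ [H _]]]]; exact: H. Qed.

Lemma req_act x x' r : req x x' -> req (ract x r) (ract x' r).
Proof. by case: HM => _ [_ [_ [_ [_ [H _]]]]]; exact: H. Qed.

Lemma raddA x y z : elt x -> elt y -> elt z ->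
  req (radd x (radd y z)) (radd (radd x y) z).
Proof. by case: HM => _ [_ [_ [_ [_ [_ [H _]]]]]]; exact: H. Qed.

Lemma raddC x y : elt x -> elt y -> req (radd x y) (radd y x).
Proof. by case: HM => _ [_ [_ [_ [_ [_ [_ [H _]]]]]]]; exact: H. Qed.

Lemma radd0l x : elt x -> req (radd (rzero M) x) x.
Proof. by case: HM => _ [_ [_ [_ [_ [_ [_ [_ [H _]]]]]]]]; exact: H. Qed.

Lemma raddN x : elt x -> req (radd x (ropp x)) (rzero M).
Proof. by case: HM => _ [_ [_ [_ [_ [_ [_ [_ [_ [H _]]]]]]]]]; exact: H. Qed.

Lemma ractDl x y r : elt x -> elt y ->
  req (ract (radd x y) r) (radd (ract x r) (ract y r)).
Proof. by case: HM => _ [_ [_ [_ [_ [_ [_ [_ [_ [_ [H _]]]]]]]]]]; exact: H. Qed.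

Lemma ractDr x r s : elt x -> req (ract x (r + s)) (radd (ract x r) (ract x s)).
Proof. by case: HM => _ [_ [_ [_ [_ [_ [_ [_ [_ [_ [_ [H _]]]]]]]]]]]; exact: H. Qed.

Lemma ractM x r s : elt x -> req (ract x (r * s)) (ract (ract x r) s).
Proof. by case: HM => _ [_ [_ [_ [_ [_ [_ [_ [_ [_ [_ [_ [H _]]]]]]]]]]]]; exact: H. Qed.

Lemma ract1 x : elt x -> req (ract x 1) x.
Proof. by case: HM => _ [_ [_ [_ [_ [_ [_ [_ [_ [_ [_ [_ [_ H]]]]]]]]]]]]; exact: H. Qed.

Lemma req_eltl x y : req x y -> elt x.
Proof. by move=> h; apply: req_trans h (req_sym h). Qed.

Lemma req_eltr x y : req x y -> elt y.
Proof. by move=> h; apply: req_eltl (req_sym h). Qed.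

Lemma eltD x y : elt x -> elt y -> elt (radd x y). Proof. exact: req_add. Qed.
Lemma eltN x : elt x -> elt (ropp x). Proof. exact: req_opp. Qed.
Lemma eltZ x r : elt x -> elt (ract x r). Proof. exact: req_act. Qed.

Lemma radd0r x : elt x -> req (radd x (rzero M)) x.
Proof. by move=> ex; apply: req_trans (raddC ex elt0) (radd0l ex). Qed.

Lemma raddNl x : elt x -> req (radd (ropp x) x) (rzero M).
Proof. by move=> ex; apply: req_trans (raddC (eltN ex) ex) (raddN ex). Qed.

Lemma raddI a b c : elt a -> elt b -> elt c ->
  req (radd a b) (radd a c) -> req b c.
Proof.
move=> ea eb ec h.
have cancel_a y : elt y -> req (radd (ropp a) (radd a y)) y.
  move=> ey; apply: req_trans (raddA (eltN ea) ea ey) _.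
  exact: req_trans (req_add (raddNl ea) ey) (radd0l ey).
apply: req_trans (req_sym (cancel_a b eb)) _.
exact: req_trans (req_add (eltN ea) h) (cancel_a c ec).
Qed.

Lemma ropp_unique a b : elt a -> elt b -> req (radd a b) (rzero M) -> req b (ropp a).
Proof.
move=> ea eb h; apply: (raddI ea eb (eltN ea)).
exact: req_trans h (req_sym (raddN ea)).
Qed.

Lemma ropp0 : req (ropp (rzero M)) (rzero M).
Proof. exact: req_trans (req_sym (radd0l (eltN elt0))) (raddN elt0). Qed.

Lemma roppK x : elt x -> req (ropp (ropp x)) x.
Proof. by move=> ex; apply/req_sym/(ropp_unique (eltN ex) ex)/raddNl. Qed.

Lemma rsub_eq0 x y : elt x -> elt y -> req (radd x (ropp y)) (rzero M) -> req x y.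
Proof.
move=> ex ey h; apply: (req_trans _ (roppK ey)).
apply: (ropp_unique (eltN ey) ex).
exact: req_trans (raddC (eltN ey) ex) h.
Qed.

Lemma rsubrr x y : req x y -> req (radd x (ropp y)) (rzero M).
Proof. by move=> h; apply: req_trans (req_add h (eltN (req_eltr h))) (raddN (req_eltr h)). Qed.

Lemma raddACA a b c d : elt a -> elt b -> elt c -> elt d ->
  req (radd (radd a b) (radd c d)) (radd (radd a c) (radd b d)).
Proof.
move=> ea eb ec ed.
apply: req_trans (req_sym (raddA ea eb (eltD ec ed))) _.
apply: req_trans (req_add ea (raddA eb ec ed)) _.
apply: req_trans (req_add ea (req_add (raddC eb ec) ed)) _.
apply: req_trans (req_add ea (req_sym (raddA ec eb ed))) _.
exact: raddA ea ec (eltD eb ed).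
Qed.

Lemma roppD x y : elt x -> elt y -> req (ropp (radd x y)) (radd (ropp x) (ropp y)).
Proof.
move=> ex ey; apply/req_sym/ropp_unique; [exact: eltD|exact: eltD (eltN ex) (eltN ey)|].
apply: req_trans (raddACA ex ey (eltN ex) (eltN ey)) _.
exact: req_trans (req_add (raddN ex) (raddN ey)) (radd0l elt0).
Qed.

Lemma ract0 r : req (ract (rzero M) r) (rzero M).
Proof.
have e0 := eltZ r elt0.
apply/req_sym/(raddI e0 elt0 e0).
apply: req_trans (radd0r e0) _.
exact: req_trans (req_act r (req_sym (radd0l elt0))) (ractDl r elt0 elt0).
Qed.

Lemma ractN x r : elt x -> req (ract (ropp x) r) (ropp (ract x r)).
Proof.
move=> ex; apply: ropp_unique (eltZ r ex) (eltZ r (eltN ex)) _.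
apply: req_trans (req_sym (ractDl r ex (eltN ex))) _.
exact: req_trans (req_act r (raddN ex)) (ract0 r).
Qed.

Lemma rsubKr x y z : elt x -> elt y -> elt z ->
  req (radd (radd x (ropp y)) (radd y (ropp z))) (radd x (ropp z)).
Proof.
move=> ex ey ez.
apply: req_trans (req_sym (raddA ex (eltN ey) (eltD ey (eltN ez)))) _.
apply: (req_add ex); apply: req_trans (raddA (eltN ey) ey (eltN ez)) _.
exact: req_trans (req_add (raddNl ey) (eltN ez)) (radd0l (eltN ez)).
Qed.

Lemma roppB x y : elt x -> elt y -> req (ropp (radd x (ropp y))) (radd y (ropp x)).
Proof.
move=> ex ey; apply: req_trans (roppD ex (eltN ey)) _.
apply: req_trans (raddC (eltN ex) (eltN (eltN ey))) _.
exact: req_add (roppK ey) (eltN ex).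
Qed.

Lemma rsubD x y x' y' : elt x -> elt y -> elt x' -> elt y' ->
  req (radd (radd x y) (ropp (radd x' y'))) (radd (radd x (ropp x')) (radd y (ropp y'))).
Proof.
move=> ex ey ex' ey'; apply: req_trans (req_add (eltD ex ey) (roppD ex' ey')) _.
exact: raddACA ex ey (eltN ex') (eltN ey').
Qed.

Lemma radd_subK a b : elt a -> elt b -> req (radd b (radd a (ropp b))) a.
Proof.
move=> ea eb; apply: req_trans (raddC eb (eltD ea (eltN eb))) _.
apply: req_trans (req_sym (raddA ea (eltN eb) eb)) _.
exact: req_trans (req_add ea (raddNl eb)) (radd0r ea).
Qed.

Lemma rsubDr a b c : elt a -> elt b -> elt c ->
  req (radd a (ropp (radd b c))) (radd (radd a (ropp b)) (ropp c)).
Proof.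
move=> ea eb ec; apply: req_trans (req_add ea (roppD eb ec)) _.
exact: raddA ea (eltN eb) (eltN ec).
Qed.

End RModTheory.

Section HomTheory.
Context {R : pzRingType} {M N : rmod R} {HM : is_rmod M} {HN : is_rmod N}.
Variables (f : car M -> car N) (hf : is_hom f).

Lemma hom_req x y : req x y -> req (f x) (f y).
Proof. by case: hf => H _ _; exact: H. Qed.

Lemma hom_elt x : elt x -> elt (f x).
Proof. exact: hom_req. Qed.

Lemma homD x y : elt x -> elt y -> req (f (radd x y)) (radd (f x) (f y)).
Proof. by case: hf => _ H _; exact: H. Qed.

Lemma homZ x r : elt x -> req (f (ract x r)) (ract (f x) r).
Proof. by case: hf => _ _ H; exact: H. Qed.

Lemma hom0 : req (f (rzero M)) (rzero N).
Proof.
have e : elt (f (rzero M)) by exact: hom_elt elt0.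
apply/req_sym/(raddI e elt0 e).
apply: req_trans (radd0r e) _.
exact: req_trans (hom_req (req_sym (radd0l elt0))) (homD elt0 elt0).
Qed.

Lemma homN x : elt x -> req (f (ropp x)) (ropp (f x)).
Proof.
move=> ex; apply: (ropp_unique (hom_elt ex) (hom_elt (eltN ex))).
apply: req_trans (req_sym (homD ex (eltN ex))) _.
exact: req_trans (hom_req (raddN ex)) hom0.
Qed.

Lemma homB x y : elt x -> elt y ->
  req (f (radd x (ropp y))) (radd (f x) (ropp (f y))).
Proof.
move=> ex ey; apply: req_trans (homD ex (eltN ey)) _.
exact: req_add (hom_elt ex) (homN ey).
Qed.

Lemma homB_eq0 x y : elt x -> elt y ->
  req (f x) (f y) -> req (f (radd x (ropp y))) (rzero N).
Proof. by move=> ex ey h; exact: req_trans (homB ex ey) (rsubrr h). Qed.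

Lemma req_of_homB_eq0 x y : elt x -> elt y ->
  req (f (radd x (ropp y))) (rzero N) -> req (f x) (f y).
Proof.
move=> ex ey h; apply: (rsub_eq0 (hom_elt ex) (hom_elt ey)).
exact: req_trans (req_sym (homB ex ey)) h.
Qed.

Lemma hom_eq0 x : req x (rzero M) -> req (f x) (rzero N).
Proof. by move=> h; apply: req_trans (hom_req h) hom0. Qed.

End HomTheory.

Section HomConstructions.
Context {R : pzRingType}.

Lemma hom_zero (M N : rmod R) {HN : is_rmod N} : is_hom (fun _ : car M => rzero N).
Proof.
split=> [x y _|x y _ _|x r _]; first exact: elt0.
  exact: req_sym (radd0l elt0).
exact: req_sym (ract0 r).
Qed.

Lemma hom_id (M : rmod R) {HM : is_rmod M} : is_hom (fun x : car M => x).
Proof. by split=> // [x y|x r] ex; [exact: eltD|exact: eltZ]. Qed.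

Lemma hom_comp (M N P : rmod R) {HN : is_rmod N} {HP : is_rmod P}
    (f : car M -> car N) (g : car N -> car P) :
  is_hom f -> is_hom g -> is_hom (fun x => g (f x)).
Proof.
move=> hf hg; split=> [x y h|x y ex ey|x r ex]; first exact/(hom_req hg)/(hom_req hf).
- apply: req_trans (hom_req hg (homD hf ex ey)) _.
  exact: (homD hg (hom_elt hf ex) (hom_elt hf ey)).
- apply: req_trans (hom_req hg (homZ hf r ex)) _.
  exact: (homZ hg r (hom_elt hf ex)).
Qed.

Lemma hom_add (M N : rmod R) {HN : is_rmod N} (f g : car M -> car N) :
  is_hom f -> is_hom g -> is_hom (fun x => radd (f x) (g x)).
Proof.
move=> hf hg; split=> [x y h|x y ex ey|x r ex].
- exact: req_add (hom_req hf h) (hom_req hg h).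
- apply: req_trans (req_add (homD hf ex ey) (homD hg ex ey)) _.
  exact: raddACA (hom_elt hf ex) (hom_elt hf ey) (hom_elt hg ex) (hom_elt hg ey).
- apply: req_trans (req_add (homZ hf r ex) (homZ hg r ex)) _.
  exact: req_sym (ractDl r (hom_elt hf ex) (hom_elt hg ex)).
Qed.

Lemma hom_opp (M N : rmod R) {HN : is_rmod N} (f : car M -> car N) :
  is_hom f -> is_hom (fun x => ropp (f x)).
Proof.
move=> hf; split=> [x y h|x y ex ey|x r ex].
- exact/req_opp/(hom_req hf).
- apply: req_trans (req_opp (homD hf ex ey)) _.
  exact: roppD (hom_elt hf ex) (hom_elt hf ey).
- apply: req_trans (req_opp (homZ hf r ex)) _.
  exact: req_sym (ractN r (hom_elt hf ex)).
Qed.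

End HomConstructions.

Section Restrict.
Context {R : pzRingType} {M : rmod R} {HM : is_rmod M}.
Implicit Types x y : car M.

Lemma restrict_rmod (e : car M -> car M -> Prop) :
  (forall x y, e x y -> e y x) ->
  (forall x y z, e x y -> e y z -> e x z) ->
  (forall x y, e x y -> elt x) ->
  (forall x y, req x y -> e x x -> e y y -> e x y) ->
  e (rzero M) (rzero M) ->
  (forall x x' y y', e x x' -> e y y' -> e (radd x y) (radd x' y')) ->
  (forall x x', e x x' -> e (ropp x) (ropp x')) ->
  (forall x x' r, e x x' -> e (ract x r) (ract x' r)) ->
  is_rmod (restrict e).
Proof.
move=> e_sym e_trans e_elt e_req e0 eD eN eZ.
have el x : e x x -> elt x by exact: e_elt.
do 6 split=> //.
split=> [x y z ex ey ez|]; first by apply: (e_req _ _ (raddA (el x ex) (el y ey) (el z ez)));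
  do ?[apply: (eD)|apply: (eZ)].
split=> [x y ex ey|]; first by apply: (e_req _ _ (raddC (el x ex) (el y ey))); apply: (eD).
split=> [x ex|]; first by apply: (e_req _ _ (radd0l (el x ex))); try apply: (eD).
split=> [x ex|]; first by apply: (e_req _ _ (raddN (el x ex))); do ?[apply: (eD)|apply: (eN)].
split=> [x y r ex ey|]; first by apply: (e_req _ _ (ractDl r (el x ex) (el y ey)));
  do ?[apply: (eD)|apply: (eZ)].
split=> [x r s ex|]; first by apply: (e_req _ _ (ractDr r s (el x ex)));
  do ?[apply: (eD)|apply: (eZ)].
split=> [x r s ex|x ex]; first by apply: (e_req _ _ (ractM r s (el x ex))); do ?apply: (eZ).
by apply: (e_req _ _ (ract1 (el x ex))); try apply: (eZ).
Qed.

Lemma restrict_req_rmod : is_rmod (restrict (@req _ M)).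
Proof.
apply: restrict_rmod => //.
- exact: req_sym.
- exact: req_trans.
- exact: req_eltl.
- exact: elt0.
- exact: req_add.
- exact: req_opp.
- exact: req_act.
Qed.

Definition submod_closed (P : car M -> Prop) :=
  [/\ P (rzero M),
      forall x y, elt x -> elt y -> P x -> P y -> P (radd x y),
      forall x, elt x -> P x -> P (ropp x) &
      forall x r, elt x -> P x -> P (ract x r)].

Definition subrel (P : car M -> Prop) x y := [/\ req x y, P x & P y].

Lemma sub_rmod P : submod_closed P -> is_rmod (restrict (subrel P)).
Proof.
case=> P0 PD PN PZ; apply: restrict_rmod.
- by move=> x y [h Px Py]; split=> //; exact: req_sym.
- by move=> x y z [h Px _] [h' _ Pz]; split=> //; exact: req_trans h h'.
- by move=> x y [h _ _]; exact: req_eltl h.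
- by move=> x y h [_ Px _] [_ Py _].
- by split=> //; exact: elt0.
- move=> x x' y y' [hx Px Px'] [hy Py Py']; split; first exact: req_add.
    exact: PD (req_eltl hx) (req_eltl hy) Px Py.
  exact: PD (req_eltr hx) (req_eltr hy) Px' Py'.
- move=> x x' [h Px Px']; split; first exact: req_opp.
    exact: PN (req_eltl h) Px.
  exact: PN (req_eltr h) Px'.
- move=> x x' r [h Px Px']; split; first exact: req_act.
    exact: PZ (req_eltl h) Px.
  exact: PZ (req_eltr h) Px'.
Qed.

Lemma ker_closed (N : rmod R) {HN : is_rmod N} (g : car M -> car N) :
  is_hom g -> submod_closed (fun x => req (g x) (rzero N)).
Proof.
move=> hg; split=> [|x y ex ey gx gy|x ex gx|x r ex gx]; first exact: hom0.
- apply: req_trans (homD hg ex ey) _.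
  exact: req_trans (req_add gx gy) (radd0l elt0).
- exact: req_trans (homN hg ex) (req_trans (req_opp gx) ropp0).
- exact: req_trans (homZ hg r ex) (req_trans (req_act r gx) (ract0 r)).
Qed.

Section Quotient.
Context {P : rmod R} {HP : is_rmod P}.
Variables (b : car P -> car M) (hb : is_hom b).

Definition quotrel x y :=
  [/\ elt x, elt y & exists z, elt z /\ req (radd x (ropp y)) (b z)].

Lemma quotrel_req x y : req x y -> quotrel x y.
Proof.
move=> h; split; [exact: req_eltl h|exact: req_eltr h|].
exists (rzero P); split; first exact: elt0.
exact: req_trans (rsubrr h) (req_sym (hom0 hb)).
Qed.

Lemma quot_rmod : is_rmod (restrict quotrel).
Proof.
apply: restrict_rmod.
- move=> x y [ex ey [z [ez h]]]; split=> //; exists (ropp z); split; first exact: eltN.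
  apply: req_trans (req_sym (roppB ex ey)) _.
  exact: req_trans (req_opp h) (req_sym (homN hb ez)).
- move=> x y z [ex ey [u [eu h]]] [_ ez [v [ev h']]]; split=> //.
  exists (radd u v); split; first exact: eltD.
  apply: req_trans (req_sym (rsubKr ex ey ez)) _.
  exact: req_trans (req_add h h') (req_sym (homD hb eu ev)).
- by move=> x y [].
- by move=> x y h _ _; exact: quotrel_req.
- exact/quotrel_req/elt0.
- move=> x x' y y' [ex ex' [u [eu h]]] [ey ey' [v [ev h']]].
  split; [exact: eltD|exact: eltD|exists (radd u v); split; first exact: eltD].
  apply: req_trans (rsubD ex ey ex' ey') _.
  exact: req_trans (req_add h h') (req_sym (homD hb eu ev)).
- move=> x x' [ex ex' [u [eu h]]].
  split; [exact: eltN|exact: eltN|exists (ropp u); split; first exact: eltN].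
  apply: req_trans (req_sym (roppD ex (eltN ex'))) _.
  exact: req_trans (req_opp h) (req_sym (homN hb eu)).
- move=> x x' r [ex ex' [u [eu h]]].
  split; [exact: eltZ|exact: eltZ|exists (ract u r); split; first exact: eltZ].
  apply: req_trans (req_add (eltZ r ex) (req_sym (ractN r ex'))) _.
  apply: req_trans (req_sym (ractDl r ex (eltN ex'))) _.
  exact: req_trans (req_act r h) (req_sym (homZ hb r eu)).
Qed.

Lemma quot_hom_kills {Q : rmod R} {HQ : is_rmod Q} (phi : car M -> car Q) :
  @is_hom R (restrict quotrel) Q phi -> forall z, elt z -> req (phi (b z)) (rzero Q).
Proof.
move=> hphi z ez; have ebz := hom_elt hb ez.
apply: (hom_eq0 (HM := quot_rmod) hphi); split; [exact: ebz|exact: elt0|].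
exists z; split=> //.
exact: req_trans (req_add ebz ropp0) (radd0r ebz).
Qed.

Lemma hom_of_quot {Q : rmod R} (phi : car M -> car Q) :
  @is_hom R (restrict quotrel) Q phi -> is_hom phi.
Proof.
case=> p1 p2 p3; split=> [x y h|x y ex ey|x r ex]; first exact/p1/quotrel_req.
- exact: (p2 _ _ (quotrel_req ex) (quotrel_req ey)).
- exact: (p3 _ r (quotrel_req ex)).
Qed.

Lemma quot_hom {Q : rmod R} {HQ : is_rmod Q} (phi : car M -> car Q) :
  is_hom phi -> (forall z, elt z -> req (phi (b z)) (rzero Q)) ->
  @is_hom R (restrict quotrel) Q phi.
Proof.
move=> hphi kills; split=> /= [x y [ex ey [z [ez h]]]|x y [ex _ _] [ey _ _]|x r [ex _ _]].
- apply: (rsub_eq0 (hom_elt hphi ex) (hom_elt hphi ey)).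
  apply: req_trans (req_sym (homB hphi ex ey)) _.
  exact: req_trans (hom_req hphi h) (kills z ez).
- exact: homD.
- exact: homZ.
Qed.

End Quotient.

End Restrict.

Lemma hom_sub {R : pzRingType} (M N : rmod R) {HM : is_rmod M} {HN : is_rmod N}
    (P : car M -> Prop) (P' : car N -> Prop) (f : car M -> car N) :
  submod_closed P -> submod_closed P' -> is_hom f -> (forall x, elt x -> P x -> P' (f x)) ->
  @is_hom R (restrict (subrel P)) (restrict (subrel P')) f.
Proof.
move=> [_ PD _ PZ] [_ P'D _ P'Z] hf fP.
split=> /= [x y [h Px Py]|x y [ex Px _] [ey Py _]|x r [ex Px _]].
- split; [exact: (hom_req hf h)|exact: fP (req_eltl h) Px|exact: fP (req_eltr h) Py].
- split; first exact: (homD hf ex ey).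
    exact: fP (eltD ex ey) (PD _ _ ex ey Px Py).
  exact: (P'D _ _ (hom_elt hf ex) (hom_elt hf ey) (fP _ ex Px) (fP _ ey Py)).
- split; first exact: (homZ hf r ex).
    exact: fP (eltZ r ex) (PZ _ r ex Px).
  exact: (P'Z _ r (hom_elt hf ex) (fP _ ex Px)).
Qed.

Lemma hom_restrict_codomain {R : pzRingType} (M N : rmod R) (e e' : car N -> car N -> Prop)
    (f : car M -> car N) :
  (forall x y, e x y -> e' x y) -> @is_hom R M (restrict e) f -> @is_hom R M (restrict e') f.
Proof.
move=> ee' [f1 f2 f3].
by split=> [x y h|x y ex ey|x r ex]; apply: ee'; [exact: f1|exact: f2|exact: f3].
Qed.

Section Injective.
Context {R : pzRingType} {M N Q : rmod R} {HM : is_rmod M} {HN : is_rmod N} {HQ : is_rmod Q}.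

Lemma injective_extend_on (D : car M -> Prop) (i : car M -> car N) (g : car M -> car Q) :
  injective_mod Q -> is_hom i -> is_hom g -> submod_closed D ->
  (forall x y, elt x -> elt y -> D x -> D y -> req (i x) (i y) -> req (g x) (g y)) ->
  exists h : car N -> car Q, is_hom h /\ forall x, elt x -> D x -> req (h (i x)) (g x).
Proof.
move=> injQ hi hg [D0 DD DN DZ] gi.
pose e x y := [/\ elt x, elt y, D x, D y & req (i x) (i y)].
have He : is_rmod (restrict e).
  apply: restrict_rmod.
  - by move=> x y [ex ey Dx Dy h]; split=> //; exact: req_sym.
  - by move=> x y z [ex _ Dx _ h] [_ ez _ Dz h']; split=> //; exact: req_trans h h'.
  - by move=> x y [].
  - by move=> x y h [ex _ Dx _ _] [ey _ Dy _ _]; split=> //; exact: (hom_req hi h).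
  - by split; [exact: elt0|exact: elt0|exact: D0|exact: D0|exact: (hom_elt hi elt0)].
  - move=> x x' y y' [ex ex' Dx Dx' hx] [ey ey' Dy Dy' hy].
    split; [exact: eltD|exact: eltD|exact: DD|exact: DD|].
    apply: req_trans (homD hi ex ey) _.
    exact: req_trans (req_add hx hy) (req_sym (homD hi ex' ey')).
  - move=> x x' [ex ex' Dx Dx' h].
    split; [exact: eltN|exact: eltN|exact: DN|exact: DN|].
    exact: req_trans (homN hi ex) (req_trans (req_opp h) (req_sym (homN hi ex'))).
  - move=> x x' r [ex ex' Dx Dx' h].
    split; [exact: eltZ|exact: eltZ|exact: DZ|exact: DZ|].
    exact: req_trans (homZ hi r ex) (req_trans (req_act r h) (req_sym (homZ hi r ex'))).
have hi_e : @is_hom R (restrict e) N i.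
  split=> /= [x y [_ _ _ _ //]|x y [ex _ _ _ _] [ey _ _ _ _]|x r [ex _ _ _ _]].
    exact: (homD hi ex ey).
  exact: (homZ hi r ex).
have hg_e : @is_hom R (restrict e) Q g.
  split=> /= [x y [ex ey Dx Dy]|x y [ex _ _ _ _] [ey _ _ _ _]|x r [ex _ _ _ _]].
  - exact: gi.
  - exact: (homD hg ex ey).
  - exact: (homZ hg r ex).
have mono_e : @is_mono R (restrict e) N i by move=> x y [ex _ Dx _ _] [ey _ Dy _ _].
have [h [hh hext]] := injQ (restrict e) N i g He HN hi_e mono_e hg_e.
by exists h; split=> // x ex Dx; apply: hext; split=> //; exact: (hom_elt hi ex).
Qed.

End Injective.

Section Complexes.
Context {R : pzRingType}.

Definition exact_at (B : cplx R) (n : int) :=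
  forall y : car (cobj B n), Defs.cycle y -> boundary y.

Definition trivial_rmod (M : rmod R) := forall a b : car M, req a b.

Definition two_term (Y : cplx R) (p : int) :=
  forall n, n <> p -> n <> p + 1 -> trivial_rmod (cobj Y n).

Lemma boundary_succ (X : cplx R) (p : int) (x : car (cobj X (p + 1))) :
  boundary x -> exists v : car (cobj X p), elt v /\ req x (dif X p (p + 1) v).
Proof. by case; rewrite addrK => v hv; exists v. Qed.

Lemma true_closed (M : rmod R) : submod_closed (fun _ : car M => True).
Proof. by []. Qed.

Section Complex.
Variables (X : cplx R) (cX : is_complex X).

Lemma cycle_closed n : submod_closed (fun x : car (cobj X n) => req (dif X n (n + 1) x) (rzero _)).
Proof. by case: cX => HX dX _ _; exact: ker_closed. Qed.

Lemma cycleB n (x y : car (cobj X n)) :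
  Defs.cycle x -> Defs.cycle y -> Defs.cycle (radd x (ropp y)).
Proof.
case: cX => HX _ _ _ [ex dx] [ey dy]; have [_ cD cN _] := cycle_closed n.
by split; [exact: eltD (eltN ey)|exact: cD (eltN ey) dx (cN _ ey dy)].
Qed.

Lemma d_eq0 i j (x : car (cobj X i)) : j <> i + 1 -> elt x -> req (dif X i j x) (rzero _).
Proof. by case: cX => _ _ zX _; exact: zX. Qed.

Lemma extend_along_d n (Q : rmod R) {HQ : is_rmod Q} (g : car (cobj X n) -> car Q) :
  injective_mod Q -> is_hom g -> (forall x, Defs.cycle x -> req (g x) (rzero Q)) ->
  exists h : car (cobj X (n + 1)) -> car Q,
    is_hom h /\ forall x, elt x -> req (h (dif X n (n + 1) x)) (g x).
Proof.
case: (cX) => HX dX _ _ injQ hg g_cyc.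
have wd x y : elt x -> elt y -> True -> True ->
    req (dif X n (n + 1) x) (dif X n (n + 1) y) -> req (g x) (g y).
  move=> ex ey _ _ dxy; apply: (req_of_homB_eq0 hg ex ey); apply: g_cyc.
  by split; [exact: eltD (eltN ey)|exact: (homB_eq0 (dX _ _) ex ey dxy)].
have [h [hh hext]] := injective_extend_on injQ (dX n (n + 1)) hg (true_closed _) wd.
by exists h; split=> // x ex; exact: hext.
Qed.

Lemma extend_on_cycles n (M Q : rmod R) {HM : is_rmod M} {HQ : is_rmod Q}
    (s : car (cobj X n) -> car M) (g : car (cobj X n) -> car Q) :
  injective_mod Q -> is_hom s -> is_hom g ->
  (forall x, Defs.cycle x -> req (s x) (rzero M) -> boundary x) ->
  (forall x, boundary x -> req (g x) (rzero Q)) ->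
  exists phi : car M -> car Q, is_hom phi /\ forall x, Defs.cycle x -> req (phi (s x)) (g x).
Proof.
case: (cX) => HX dX _ _ injQ hs hg s_inj g_bd.
have wd x y : elt x -> elt y -> req (dif X n (n + 1) x) (rzero _) ->
    req (dif X n (n + 1) y) (rzero _) -> req (s x) (s y) -> req (g x) (g y).
  move=> ex ey dx dy sxy; apply: (req_of_homB_eq0 hg ex ey); apply: g_bd.
  exact: s_inj (cycleB (conj ex dx) (conj ey dy)) (homB_eq0 hs ex ey sxy).
have [phi [hphi hext]] := injective_extend_on injQ hs hg (cycle_closed n) wd.
by exists phi; split=> // x [ex dx]; exact: hext.
Qed.

End Complex.
End Complexes.

Section TwoTerm.
Context {R : pzRingType} (A Y : cplx R).

Lemma is_chain_succ (f : cmap A Y) : is_complex A -> is_complex Y -> (forall n, is_hom (f n)) ->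
  (forall i (x : car (cobj A i)), elt x ->
     req (f (i + 1) (dif A i (i + 1) x)) (dif Y i (i + 1) (f i x))) ->
  is_chain f.
Proof.
move=> cA cY hf hsucc; split=> // i j x ex.
have [->|ne] := eqVneq j (i + 1); first exact: hsucc.
have [HA _ _ _] := cA; have [HY _ _ _] := cY; have ne' : j <> i + 1 by apply/eqP.
apply: req_trans (hom_eq0 (hf j) (d_eq0 cA ne' ex)) _.
exact: (req_sym (d_eq0 cY ne' (hom_elt (hf i) ex))).
Qed.

Definition single (p q : int) (h : car (cobj A p) -> car (cobj Y q)) (i j : int) :
    car (cobj A i) -> car (cobj Y j) :=
  match i =P p, j =P q with
  | ReflectT ei, ReflectT ej =>
      fun x => ecast k (car (cobj Y k)) (esym ej) (h (ecast k (car (cobj A k)) ei x))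
  | _, _ => fun _ => rzero _
  end.
Arguments single {p q} h i j.

Lemma singleE p q (h : car (cobj A p) -> car (cobj Y q)) : single h p q = h.
Proof.
rewrite /single; case: eqP => [ei|//]; case: eqP => [ej|//].
by rewrite (eq_irrelevance ei erefl) (eq_irrelevance ej erefl).
Qed.

Lemma single_other p q (h : car (cobj A p) -> car (cobj Y q)) i j :
  i <> p \/ j <> q -> single h i j = fun _ => rzero _.
Proof. by rewrite /single; case: eqP => [ei|//]; case: eqP => [ej|//]; case. Qed.

Lemma single_hom p q (h : car (cobj A p) -> car (cobj Y q)) i j :
  is_rmod (cobj Y j) -> is_hom h -> is_hom (single h i j).
Proof.
move=> HYj hh; have [ei|ni] := eqVneq i p; last first.
  by rewrite single_other; [exact: hom_zero|left; apply/eqP].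
have [ej|nj] := eqVneq j q; last first.
  by rewrite single_other; [exact: hom_zero|right; apply/eqP].
by subst i j; rewrite singleE.
Qed.

Definition two_term_homotopy (p : int) (H0 : car (cobj A (p + 1)) -> car (cobj Y p))
    (H1 : car (cobj A (p + 1 + 1)) -> car (cobj Y (p + 1))) i j :=
  if i == p + 1 then single H0 i j else single H1 i j.
Arguments two_term_homotopy {p} H0 H1 i j.

Lemma two_term_null_homotopic (p : int) (f : cmap A Y) H0 H1 :
  is_complex A -> is_complex Y -> two_term Y p -> is_hom H0 -> is_hom H1 ->
  (forall x, elt x -> req (f p x) (H0 (dif A p (p + 1) x))) ->
  (forall x, elt x -> req (f (p + 1) x)
     (radd (dif Y p (p + 1) (H0 x)) (H1 (dif A (p + 1) (p + 1 + 1) x)))) ->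
  null_homotopic f.
Proof.
move=> [HA dA _ _] [HY dY _ _] tY hH0 hH1 fp fp1.
exists (two_term_homotopy H0 H1); split=> [i j|n x ex].
  by rewrite /two_term_homotopy; case: ifP=> _; exact: single_hom.
rewrite /two_term_homotopy.
have [en|np] := eqVneq n p.
  subst n; rewrite eqxx (_ : (p == p + 1) = false); last by apply/eqP; lia.
  rewrite singleE single_other; last by left; lia.
  have eH : elt (H0 (dif A p (p + 1) x)) by exact: (hom_elt hH0 (hom_elt (dA _ _) ex)).
  apply: req_trans (fp x ex) (req_sym _).
  exact: req_trans (req_add (hom0 (dY _ _)) eH) (radd0l eH).
have [en|np1] := eqVneq n (p + 1).
  subst n; rewrite addrK (_ : (p + 1 + 1 == p + 1) = false); last by apply/eqP; lia.
  by rewrite !singleE; exact: fp1.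
apply: tY; exact/eqP.
Qed.

Definition two_term_cmap (p : int) (f0 : car (cobj A p) -> car (cobj Y p))
    (f1 : car (cobj A (p + 1)) -> car (cobj Y (p + 1))) : cmap A Y :=
  fun n => if n == p then single f0 n n else single f1 n n.
Arguments two_term_cmap {p} f0 f1 n.

Lemma two_term_cmap_p p f0 f1 : @two_term_cmap p f0 f1 p = f0.
Proof. by rewrite /two_term_cmap eqxx singleE. Qed.

Lemma two_term_cmap_p1 p f0 f1 : @two_term_cmap p f0 f1 (p + 1) = f1.
Proof. by rewrite /two_term_cmap (_ : (p + 1 == p) = false) ?singleE //; apply/eqP; lia. Qed.

Lemma two_term_cmap_other p f0 f1 n :
  n <> p -> n <> p + 1 -> @two_term_cmap p f0 f1 n = fun _ => rzero _.
Proof.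
move=> np np1; rewrite /two_term_cmap (_ : (n == p) = false); last exact/eqP.
by rewrite single_other //; left.
Qed.

Lemma two_term_cmap_chain (p : int) f0 f1 :
  is_complex A -> is_complex Y -> is_hom f0 -> is_hom f1 ->
  (forall x, elt x -> req (f0 (dif A (p - 1) p x)) (rzero _)) ->
  (forall x, elt x -> req (f1 (dif A p (p + 1) x)) (dif Y p (p + 1) (f0 x))) ->
  (forall x, elt x -> req (dif Y (p + 1) (p + 1 + 1) (f1 x)) (rzero _)) ->
  is_chain (two_term_cmap f0 f1).
Proof.
move=> cA cY hf0 hf1 f0d f1d df1; have [HA dA _ _] := cA; have [HY dY _ _] := cY.
apply: is_chain_succ => // [n|i x ex].
  by rewrite /two_term_cmap; case: ifP => _; exact: single_hom.
have [ei|ip] := eqVneq i p.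
  by subst i; rewrite two_term_cmap_p two_term_cmap_p1; exact: f1d.
have [ei|ip1] := eqVneq i (p + 1).
  subst i; rewrite two_term_cmap_p1 two_term_cmap_other; try lia.
  exact/req_sym/df1.
have [ei|ip'] := eqVneq i (p - 1).
  subst i; rewrite subrK two_term_cmap_p two_term_cmap_other; try lia.
  exact: req_trans (f0d x ex) (req_sym (hom0 (dY _ _))).
rewrite !two_term_cmap_other; try lia.
exact: req_sym (hom0 (dY _ _)).
Qed.

End TwoTerm.

Lemma cycle0 {R : pzRingType} (X : cplx R) n : is_complex X -> Defs.cycle (rzero (cobj X n)).
Proof. by case=> HX dX _ _; split; [exact: elt0|exact: hom0 (dX _ _)]. Qed.

Lemma boundary_eq0 {R : pzRingType} (X : cplx R) n (x : car (cobj X n)) :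
  is_complex X -> req x (rzero _) -> boundary x.
Proof.
case=> HX dX _ _ h; exists (rzero _); split; first exact: elt0.
exact: req_trans h (req_sym (hom0 (dX _ _))).
Qed.

Section TruncLe0.
Context {R : pzRingType} (X : cplx R) (cX : is_complex X).

Definition le0_pred n (z : car (cobj X n)) : Prop :=
  if n < 0 then True
  else if n == 0 then req (dif X n (n + 1) z) (rzero _) else req z (rzero _).

Lemma le0_closed n : submod_closed (@le0_pred n).
Proof.
case: cX => HX dX _ _; rewrite /le0_pred; case: ltP => _; first exact: true_closed.
case: eqP => _; first exact: ker_closed.
exact: (ker_closed hom_id).
Qed.

Lemma le0_pred0 n : le0_pred (rzero (cobj X n)).
Proof. by case: (le0_closed n). Qed.

Lemma le0_pred_neg n (z : car (cobj X n)) : n < 0 -> le0_pred z.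
Proof. by rewrite /le0_pred => ->. Qed.

Lemma le0_pred_pos n (z : car (cobj X n)) : 0 < n -> le0_pred z -> req z (rzero _).
Proof.
rewrite /le0_pred => n_gt0; have -> : (n < 0) = false by lia.
by have -> : (n == 0) = false by lia.
Qed.

Lemma le0_pred_d i j (x : car (cobj X i)) : elt x -> le0_pred x -> le0_pred (dif X i j x).
Proof.
case: (cX) => HX dX zX ddX ex Px; rewrite /le0_pred; case: ltP => // j_ge0.
case: eqP => [->|j_ne0]; first exact: ddX.
have [eij|nij] := eqVneq j (i + 1); last by apply: zX ex; apply/eqP.
subst j; move: Px; rewrite /le0_pred; case: ltP => [i_lt0|i_ge0]; first lia.
by case: eqP => // _; exact: (hom_eq0 (dX _ _)).
Qed.

Lemma trunc_le0_rmod n : is_rmod (cobj (trunc_le0 X) n).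
Proof. by case: cX => HX _ _ _; exact: (sub_rmod (le0_closed n)). Qed.

Lemma trunc_le0_complex : is_complex (trunc_le0 X).
Proof.
have [HX dX zX ddX] := cX; split=> /= [n|i j|i j x ne [ex Px _]|i j k x [ex Px _]].
- exact: trunc_le0_rmod.
- apply: hom_sub (le0_closed i) (le0_closed j) (dX i j) _ => x ex; exact: le0_pred_d.
- split; [exact: zX|exact: le0_pred_d|exact: le0_pred0].
- split; [exact: ddX| |exact: le0_pred0].
  exact: (le0_pred_d k (hom_elt (dX i j) ex) (le0_pred_d j ex Px)).
Qed.

Definition trunc_incl : cmap (trunc_le0 X) X := fun n x => x.

Lemma trunc_incl_chain : is_chain trunc_incl.
Proof.
have [HX dX _ _] := cX; split=> [n|i j x [ex _ _]]; last exact: (hom_elt (dX _ _) ex).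
split=> [x y [] //|x y [ex _ _] [ey _ _]|x r [ex _ _]]; [exact: eltD|exact: eltZ].
Qed.

Lemma trunc_incl_qiso : (forall n, 0 < n -> exact_at X n) -> quasi_iso trunc_incl.
Proof.
move=> exX n; have cT := trunc_le0_complex; have [HX dX _ _] := cX.
split=> [y [ey dy]|x [[ex Px _] _] bx]; have [n_gt0|n_le0] := ltP 0 n.
- have [z [ez hz]] := exX n n_gt0 y (conj ey dy).
  exists (rzero _); split; first exact: cycle0.
  exists (ropp z); split; first exact: eltN.
  apply: req_trans (radd0l (eltN ey)) _.
  exact: req_trans (req_opp hz) (req_sym (homN (dX _ _) ez)).
- have Py : le0_pred y.
    by rewrite /le0_pred; case: ltP => // n_ge0; case: eqP => // n0; lia.
  exists y; split; last exact: boundary_eq0 cX (raddN ey).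
  by split; split=> //; [exact: le0_pred_d|exact: le0_pred0].
- apply: boundary_eq0 cT _; split; [exact: le0_pred_pos n_gt0 Px|exact: Px|exact: le0_pred0].
- case: bx => z [ez hz]; have Pz : le0_pred z by apply: le0_pred_neg; lia.
  by exists z; split; split=> //; exact: le0_pred_d.
Qed.

End TruncLe0.
Arguments trunc_incl {R} X n x.

Section Lift.
Context {R : pzRingType} (A Y : cplx R) (p : int).
Hypotheses (cA : is_complex A) (cY : is_complex Y).

Definition lift_defect (f : cmap A Y) (H0 : car (cobj A (p + 1)) -> car (cobj Y p))
    (x : car (cobj A (p + 1))) :=
  radd (f (p + 1) x) (ropp (dif Y p (p + 1) (H0 x))).

Lemma lift_defect_hom f H0 : is_chain f -> is_hom H0 -> is_hom (lift_defect f H0).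
Proof.
have [HA _ _ _] := cA; have [HY dY _ _] := cY.
by move=> [hf _] hH0; apply: hom_add (hf _) (hom_opp (hom_comp hH0 (dY _ _))).
Qed.

Lemma exists_lift f : is_chain f -> injective_mod (cobj Y p) ->
  trivial_rmod (cobj Y (p - 1)) -> exact_at A p ->
  exists H0 : car (cobj A (p + 1)) -> car (cobj Y p),
    is_hom H0 /\ forall x, elt x -> req (f p x) (H0 (dif A p (p + 1) x)).
Proof.
have [HY dY _ _] := cY.
move=> [hf fd] injY trivY exA; have [|H0 [hH0 H0d]] := extend_along_d cA injY (hf p).
  move=> x /exA [u [eu xu]]; apply: req_trans (hom_req (hf p) xu) _.
  exact: req_trans (fd _ _ u eu) (hom_eq0 (dY _ _) (trivY _ _)).
by exists H0; split=> // x ex; exact: req_sym (H0d x ex).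
Qed.

Lemma lift_defect_d f H0 : is_chain f -> is_hom H0 ->
  (forall x, elt x -> req (f p x) (H0 (dif A p (p + 1) x))) ->
  forall v, elt v -> req (lift_defect f H0 (dif A p (p + 1) v)) (rzero _).
Proof.
have [HY dY _ _] := cY.
move=> [_ fd] hH0 H0d v ev; apply: rsubrr.
exact: req_trans (fd _ _ v ev) (hom_req (dY _ _) (H0d v ev)).
Qed.

Lemma null_homotopic_of_lift f H0 : is_chain f -> two_term Y p ->
  injective_mod (cobj Y (p + 1)) -> is_hom H0 ->
  (forall x, elt x -> req (f p x) (H0 (dif A p (p + 1) x))) ->
  (forall x, Defs.cycle x -> req (lift_defect f H0 x) (rzero _)) ->
  null_homotopic f.
Proof.
have [HA _ _ _] := cA; have [HY dY _ _] := cY.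
move=> cf tY injY hH0 H0d defect_cyc; have [hf _] := cf.
have [H1 [hH1 H1d]] := extend_along_d cA injY (lift_defect_hom cf hH0) defect_cyc.
apply: (two_term_null_homotopic cA cY tY hH0 hH1 H0d) => x ex.
have ef := hom_elt (hf (p + 1)) ex; have edH := hom_elt (dY p (p + 1)) (hom_elt hH0 ex).
exact: req_sym (req_trans (req_add edH (H1d x ex)) (radd_subK ef edH)).
Qed.

End Lift.

Lemma exact_two_term_null {R : pzRingType} (A Y : cplx R) (p : int) (f : cmap A Y) :
  is_complex A -> is_complex Y -> is_chain f -> two_term Y p ->
  injective_mod (cobj Y p) -> injective_mod (cobj Y (p + 1)) ->
  exact_at A p -> exact_at A (p + 1) -> null_homotopic f.
Proof.
move=> cA cY cf tY injY0 injY1 exA0 exA1.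
have [|H0 [hH0 H0d]] := exists_lift cA cY cf injY0 _ exA0; first by apply: tY; lia.
apply: (null_homotopic_of_lift cA cY cf tY injY1 hH0 H0d) => x /exA1 /boundary_succ [v [ev xv]].
have [hf _] := cf; have [HY _ _ _] := cY.
apply: req_trans (hom_req (lift_defect_hom cA cY cf hH0) xv) _.
exact: (lift_defect_d cY cf hH0 H0d ev).
Qed.

Lemma shift_complex {R : pzRingType} (X : cplx R) (i : int) :
  is_complex X -> is_complex (shift X i).
Proof.
move=> [HX dX zX ddX]; split=> /= [n|m n|m n x ne ex|m n k x ex]; first exact: HX.
- by case: (odd _); [exact: hom_opp|exact: dX].
- have h : req (dif X (m + i) (n + i) x) (rzero _) by apply: zX ex; lia.
  by case: (odd _); [exact: req_trans (req_opp h) ropp0|exact: h].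
- have h := ddX _ (n + i) (k + i) x ex; case: (odd _) => //.
  have edx := hom_elt (dX (m + i) (n + i)) ex.
  apply: req_trans (req_opp (homN (dX _ _) edx)) _.
  exact: req_trans (req_opp (req_opp h)) (req_trans (req_opp ropp0) ropp0).
Qed.

Lemma zero_mod_rmod {R : pzRingType} : is_rmod (zero_mod R).
Proof. by do 13 split. Qed.

Section Zeta.
Context {R : pzRingType} {Q0 Q1 : rmod R} {HQ0 : is_rmod Q0} {HQ1 : is_rmod Q1}.
Variables (zeta : car Q0 -> car Q1) (hz : is_hom zeta).

Lemma zeta_obj_rmod n : is_rmod (zeta_obj Q0 Q1 n).
Proof. by case: n => [[|[|k]]|k] //=; exact: zero_mod_rmod. Qed.

Lemma zeta_complex : is_complex (zeta_cplx zeta).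
Proof.
have H00 := @zero_mod_rmod R.
split=> [n|i j|i j x ne _|i j k x ex]; first exact: zeta_obj_rmod.
- by case: i => [[|[|i]]|i]; case: j => [[|[|j]]|j] /=; first [exact: hz|exact: hom_zero].
- case: i ne x => [[|[|i]]|i]; case: j => [[|[|j]]|j] //= ne x;
    first [exact: elt0|lia].
- case: i x ex => [[|[|i]]|i]; case: j => [[|[|j]]|j]; case: k => [[|[|k]]|k] /= x ex;
    first [done|exact: elt0|exact: hom0 hz].
Qed.

Lemma two_term_shift_zeta i : two_term (shift (zeta_cplx zeta) i) (- i).
Proof.
move=> n n1 n2 /=; have : n + i <> 0 by lia.
have : n + i <> 1 by lia.
by case: (n + i) => [[|[|k]]|k].
Qed.

Lemma shift_zeta_obj0 i : cobj (shift (zeta_cplx zeta) i) (- i) = Q0.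
Proof. by rewrite /= addNr. Qed.

Lemma shift_zeta_obj1 i : cobj (shift (zeta_cplx zeta) i) (- i + 1) = Q1.
Proof. by rewrite /= addrAC addNr add0r. Qed.

End Zeta.
Arguments two_term_shift_zeta {R Q0 Q1} zeta i.

Lemma trunc_le0_roof_null {R : pzRingType} (A Y : cplx R) (p : int) (f : cmap A Y) :
  is_complex A -> is_complex Y -> is_chain f -> two_term Y p -> 0 <= p ->
  (forall x : car (cobj (trunc_le0 A) p), elt x -> req (f p x) (rzero _)) ->
  null_homotopic (cmap_comp f (trunc_incl A)).
Proof.
move=> cA cY [hf _] tY p_ge0 f_p; have cT := trunc_le0_complex cA.
have [HY dY _ _] := cY; have [HA _ _ _] := cA.
apply: (two_term_null_homotopic cT cY tY (hom_zero _) (hom_zero _)) => [x ex|x [ex Px _]].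
  exact: f_p.
have p1_gt0 : 0 < p + 1 by lia.
have x0 : @req _ (cobj A (p + 1)) x (rzero _) := le0_pred_pos (X := A) p1_gt0 Px.
apply: req_trans (hom_eq0 (hf _) x0) (req_sym _).
exact: req_trans (req_add (hom0 (dY _ _)) elt0) (radd0l elt0).
Qed.

Section TruncExact.
Context {R : pzRingType} (X B : cplx R) (cX : is_complex X).

Lemma qiso_trunc_le0_exact (s : cmap B (trunc_le0 X)) : is_chain s -> quasi_iso s ->
  forall n, 0 < n -> exact_at B n.
Proof.
move=> [hs _] qs n n_gt0 y cy; apply: (proj2 (qs n) _ cy).
have [_ Ps _] := hom_elt (hs n) (proj1 cy).
apply: boundary_eq0 (trunc_le0_complex cX) _.
by split; [exact: le0_pred_pos Ps|exact: Ps|exact: le0_pred0].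
Qed.

Lemma trunc_ge0_req_neg n (x y : car (cobj X n)) : n < 0 ->
  @req _ (cobj (trunc_ge0 X) n) x y = (req x (rzero _) /\ req y (rzero _)).
Proof. by move=> n_lt0 /=; rewrite n_lt0. Qed.

Lemma qiso_trunc_ge0_exact (s : cmap B (trunc_ge0 X)) : is_chain s -> quasi_iso s ->
  forall n, n < 0 -> exact_at B n.
Proof.
have [HX dX _ _] := cX.
move=> [hs _] qs n n_lt0 y cy; apply: (proj2 (qs n) _ cy); exists (rzero _).
have := hom_elt (hs n) (proj1 cy); rewrite /elt !trunc_ge0_req_neg //; last lia.
by case=> sy0 _ /=; split; split=> //; [exact: elt0|exact: elt0|exact: hom0 (dX _ _)].
Qed.

End TruncExact.

(* X^0 / Im d^-1, which is also, by conversion, the degree-0 module of [trunc_ge0 X]. *)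
Definition coker0 {R : pzRingType} (X : cplx R) : rmod R :=
  restrict (quotrel (dif X (0 - 1) 0)).

Lemma coker0_rmod {R : pzRingType} (X : cplx R) : is_complex X -> is_rmod (coker0 X).
Proof. by case=> HX dX _ _; exact: quot_rmod (dX _ _). Qed.

Section RoofLe0.
(* Keeps the degree argument of the section variables [s] and [f] explicit. *)
Local Unset Implicit Arguments.
Context {R : pzRingType} {Q0 Q1 : rmod R} {HQ0 : is_rmod Q0} {HQ1 : is_rmod Q1}.
Context (zeta : car Q0 -> car Q1) (hz : is_hom zeta).
Context (injQ0 : injective_mod Q0) (injQ1 : injective_mod Q1).
Context (X B : cplx R) (cX : is_complex X) (cB : is_complex B).
Context (s : cmap B (trunc_le0 X)) (cs : is_chain s) (qs : quasi_iso s).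
Context (f : cmap B (shift (zeta_cplx zeta) 0)) (cf : is_chain f).

Lemma s0_coker_hom : @is_hom R (cobj B 0) (coker0 X) (s 0).
Proof.
have [HX dX _ _] := cX; apply: (hom_restrict_codomain _ (proj1 cs 0)).
by move=> x y [h _ _]; exact: quotrel_req.
Qed.

Lemma boundary_of_s0_coker_eq0 x :
  Defs.cycle x -> @req _ (coker0 X) (s 0 x) (rzero _) -> boundary x.
Proof.
have [HX dX _ ddX] := cX; move=> cx [es _ [w [ew hw]]].
apply: (proj2 (qs 0) x cx); exists w.
have Pw : le0_pred w by exact: le0_pred_neg.
split; first by split.
have [_ Ps _] := hom_elt (proj1 cs 0) (proj1 cx).
split=> /=; [|exact: Ps|exact: ddX].
exact: req_trans (req_sym (radd0r es)) (req_trans (req_add es (req_sym ropp0)) hw).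
Qed.

Lemma f0_kills_boundaries x : boundary x -> req (f 0 x) (rzero Q0).
Proof.
have [HB _ _ _] := cB; have [hf fd] := cf.
have [_ dY _ _] := shift_complex 0 (zeta_complex hz).
case=> z [ez xz]; apply: req_trans (hom_req (hf 0) xz) _.
by apply: req_trans (fd _ _ z ez) _; apply: (hom_eq0 (dY _ _)).
Qed.

Lemma f0_factors_through_coker0 : exists phi : car (coker0 X) -> car Q0,
  is_hom phi /\ forall x, Defs.cycle x -> req (phi (s 0 x)) (f 0 x).
Proof.
have [HB _ _ _] := cB; have HN := coker0_rmod cX.
exact: (extend_on_cycles cB injQ0 s0_coker_hom (proj1 cf 0)
  boundary_of_s0_coker_eq0 f0_kills_boundaries).
Qed.

Section Phi.
Context (phi : car (coker0 X) -> car Q0) (hphi : is_hom phi).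
Hypothesis phi_s0 : forall x, Defs.cycle x -> req (phi (s 0 x)) (f 0 x).

Lemma zeta_phi_kills_cycles z : Defs.cycle z -> req (zeta (phi z)) (rzero Q1).
Proof.
have [HX dX _ ddX] := cX; have [HB dB _ _] := cB; have [hf fd] := cf.
have HN := coker0_rmod cX.
move=> [ez dz]; have cz : @Defs.cycle _ (trunc_le0 X) 0 z.
  by split; split=> //=; exact: elt0.
have [x [[ex dx] [w [[ew _ _] [hw _ _]]]]] := proj1 (qs 0) z cz.
have [esx _ _] := hom_elt (proj1 cs 0) ex.
have sxz : @req _ (coker0 X) (s 0 x) z by split=> //; exists w.
apply: (req_trans (hom_req hz (hom_req hphi (req_sym sxz)))).
apply: (req_trans (hom_req hz (phi_s0 _ (conj ex dx)))).
exact: req_trans (req_sym (fd 0 1 x ex)) (hom_eq0 (hf 1) dx).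
Qed.

Lemma phi_kills_s0_cycles : HomK_zero X (zeta_cplx zeta) ->
  forall x, Defs.cycle x -> req (phi (s 0 x)) (rzero Q0).
Proof.
move=> hK x0 cx0; have [HX dX _ _] := cX; have HN := coker0_rmod cX.
have cZ : is_complex (zeta_cplx zeta) by exact: zeta_complex.
have hphiX : @is_hom R (cobj X 0) Q0 phi by exact: (hom_of_quot (dX _ _) hphi).
have [psi [hpsi psid]] := extend_along_d cX injQ1 (hom_comp hphiX hz) zeta_phi_kills_cycles.
have chF : is_chain (@two_term_cmap _ X (zeta_cplx zeta) 0 phi psi).
  by apply: (two_term_cmap_chain cX cZ hphiX hpsi (quot_hom_kills (dX _ _) hphi) psid).
have [K [hK1 eK]] := hK _ chF.
have [esx Psx _] := hom_elt (proj1 cs 0) (proj1 cx0).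
have eK0 := eK 0 (s 0 x0) esx; rewrite two_term_cmap_p in eK0.
have d_sx0 : req (dif X 0 (0 + 1) (s 0 x0)) (rzero _) by exact: Psx.
have dZ0 : req (dif (zeta_cplx zeta) (0 - 1) 0 (K 0 (0 - 1) (s 0 x0))) (rzero Q0).
  exact: (@elt0 _ Q0 _).
apply: (req_trans eK0).
exact: req_trans (req_add dZ0 (hom_eq0 (hK1 _ _) d_sx0)) (radd0l elt0).
Qed.

End Phi.

Lemma roof_le0_kills_cycles : HomK_zero X (zeta_cplx zeta) ->
  forall x, Defs.cycle x -> req (f 0 x) (rzero Q0).
Proof.
move=> hK x cx; have [phi [hphi phi_s0]] := f0_factors_through_coker0.
exact: req_trans (req_sym (phi_s0 x cx)) (phi_kills_s0_cycles phi hphi phi_s0 hK x cx).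
Qed.

End RoofLe0.

Section RoofGe0.
Local Unset Implicit Arguments.
Context {R : pzRingType} (X B Y : cplx R).
Context (cX : is_complex X) (cB : is_complex B) (cY : is_complex Y).
Context (s : cmap B (trunc_ge0 X)) (cs : is_chain s) (qs : quasi_iso s).
Context (tY : two_term Y (- 1)) (injY0 : injective_mod (cobj Y 0)).

Lemma boundary_of_s0_coker_eq0_ge0 x :
  Defs.cycle x -> @req _ (coker0 X) (s 0 x) (rzero _) -> boundary x.
Proof.
have [HX dX _ _] := cX; have HN := coker0_rmod cX.
move=> cx sx0; apply: (proj2 (qs 0) x cx).
exists (rzero _); split; first by split; exact: elt0.
apply: req_trans sx0 _.
exact: (quotrel_req (dX _ _) (req_sym (hom0 (dX _ _)))).
Qed.

Lemma s0_d_coker_eq0 u : elt u -> @req _ (coker0 X) (s 0 (dif B (0 - 1) 0 u)) (rzero _).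
Proof.
have [HX dX _ _] := cX; have [hs sd] := cs; have HN := coker0_rmod cX.
move=> eu; have su0 : @req _ (cobj X (0 - 1)) (s (0 - 1) u) (rzero _).
  by case: (hom_elt (hs (0 - 1)) eu).
apply: (req_trans (sd _ _ u eu)).
exact: (quotrel_req (dX _ _) (hom_eq0 (dX _ _) su0)).
Qed.

Lemma d_s0_cycle x : Defs.cycle x -> req (dif X 0 (0 + 1) (s 0 x)) (rzero _).
Proof.
have [HX _ _ _] := cX; have [HB _ _ _] := cB; have [hs sd] := cs.
have HT1 : is_rmod (cobj (trunc_ge0 X) (0 + 1)).
  exact: (restrict_req_rmod (M := cobj X (0 + 1))).
move=> [ex dx].
have sdx : @req _ (cobj X (0 + 1)) (s (0 + 1) (dif B 0 (0 + 1) x)) (dif X 0 (0 + 1) (s 0 x)).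
  exact: (sd 0 (0 + 1) x ex).
have sdx0 : @req _ (cobj X (0 + 1)) (s (0 + 1) (dif B 0 (0 + 1) x)) (rzero _).
  exact: (hom_eq0 (hs _) dx).
exact: req_trans (req_sym sdx) sdx0.
Qed.

Section Correction.
Context (g : car (cobj B 0) -> car (cobj Y 0)) (hg : is_hom g).
Context (phi : car (coker0 X) -> car (cobj Y 0)) (hphi : is_hom phi).
Hypothesis phi_s0 : forall x, Defs.cycle x -> req (phi (s 0 x)) (g x).

Lemma correction_of_phi : HomK_zero X Y ->
  exists G : car (cobj B 0) -> car (cobj Y (0 - 1)), [/\ is_hom G,
    forall u, elt u -> req (G (dif B (0 - 1) 0 u)) (rzero _) &
    forall x, Defs.cycle x -> req (g x) (dif Y (0 - 1) 0 (G x))].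
Proof.
move=> hK; have [HX dX _ _] := cX; have [HY dY _ _] := cY; have [hs _] := cs.
have HN := coker0_rmod cX.
have hphiX : @is_hom R (cobj X 0) (cobj Y 0) phi by exact: (hom_of_quot (dX _ _) hphi).
have chF : is_chain (@two_term_cmap _ X Y 0 phi (fun _ => rzero _)).
  apply: (two_term_cmap_chain cX cY hphiX (hom_zero _) (quot_hom_kills (dX _ _) hphi)) => x ex.
    by apply: tY; lia.
  exact: hom0 (dY _ _).
have [K [hK1 eK]] := hK _ chF.
pose K0 := K 0 (0 - 1).
have K0d y : elt y -> req (K0 (dif X (0 - 1) 0 y)) (rzero _).
  move=> ey; have eK1 := eK (0 - 1) y ey; rewrite two_term_cmap_other in eK1; try lia.
  have dK : req (dif Y (0 - 1 - 1) (0 - 1) (K (0 - 1) (0 - 1 - 1) y)) (rzero _).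
    by apply: (hom_eq0 (dY _ _)); apply: tY; lia.
  have eKd : elt (K0 (dif X (0 - 1) 0 y)) by exact: (hom_elt (hK1 _ _) (hom_elt (dX _ _) ey)).
  apply: req_trans (req_sym (radd0l eKd)) _.
  exact: req_trans (req_add (req_sym dK) eKd) (req_sym eK1).
have hK0 : @is_hom R (coker0 X) (cobj Y (0 - 1)) K0 by exact: (quot_hom (hK1 _ _) K0d).
exists (fun x => K0 (s 0 x)); split.
- exact: (hom_comp (N := coker0 X) (hs 0) hK0).
- by move=> u eu; apply: (hom_eq0 hK0); exact: s0_d_coker_eq0.
- move=> x [ex dx]; have esxN : @elt _ (coker0 X) (s 0 x) by exact: (hom_elt (hs 0) ex).
  have [esx _ _] := esxN; have dsx := d_s0_cycle x (conj ex dx).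
  have eK0 := eK 0 (s 0 x) esx; rewrite two_term_cmap_p in eK0.
  apply: (req_trans (req_sym (phi_s0 x (conj ex dx)))); apply: (req_trans eK0).
  have edK := hom_elt (dY (0 - 1) 0) (hom_elt hK0 esxN).
  exact: req_trans (req_add edK (hom_eq0 (hK1 _ _) dsx)) (radd0r edK).
Qed.

End Correction.

Lemma exists_correction (g : car (cobj B 0) -> car (cobj Y 0)) :
  HomK_zero X Y -> is_hom g -> (forall x, boundary x -> req (g x) (rzero _)) ->
  exists G : car (cobj B 0) -> car (cobj Y (0 - 1)), [/\ is_hom G,
    forall u, elt u -> req (G (dif B (0 - 1) 0 u)) (rzero _) &
    forall x, Defs.cycle x -> req (g x) (dif Y (0 - 1) 0 (G x))].
Proof.
move=> hK hg g_bd; have [HB _ _ _] := cB; have [HY _ _ _] := cY; have HN := coker0_rmod cX.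
have [phi [hphi phi_s0]] :=
  extend_on_cycles cB injY0 (M := coker0 X) (proj1 cs 0) hg boundary_of_s0_coker_eq0_ge0 g_bd.
exact: (correction_of_phi g phi hphi phi_s0 hK).
Qed.

Lemma roof_ge0_null (f : cmap B Y) : injective_mod (cobj Y (- 1)) ->
  HomK_zero X Y -> is_chain f -> null_homotopic f.
Proof.
move=> injY hK cf; have [HB dB _ _] := cB; have [HY dY _ _] := cY; have [hf _] := cf.
have exB := qiso_trunc_ge0_exact cX cs qs.
have trivY : trivial_rmod (cobj Y (- 1 - 1)) by apply: tY; lia.
have exB1 : exact_at B (- 1) by apply: exB; lia.
have [H0 [hH0 H0d]] := exists_lift cB cY cf injY trivY exB1.
have hg := lift_defect_hom cB cY cf hH0.
have g_bd x : boundary x -> req (lift_defect f H0 x) (rzero _).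
  move=> /(boundary_succ (p := - 1)) [v [ev xv]].
  exact: req_trans (hom_req hg xv) (lift_defect_d cY cf hH0 H0d ev).
have [G [hG Gd Gc]] := exists_correction (lift_defect f H0) hK hg g_bd.
apply: (null_homotopic_of_lift cB cY cf tY injY0 (hom_add hH0 hG)).
- move=> x ex; have eH := hom_elt hH0 (hom_elt (dB _ _) ex).
  apply: (req_trans (H0d x ex)); apply: req_sym.
  exact: req_trans (req_add eH (Gd x ex)) (radd0r eH).
- move=> x cx; have [ex _] := cx.
  have ef := hom_elt (hf _) ex; have eH := hom_elt (dY (- 1) (- 1 + 1)) (hom_elt hH0 ex).
  have eG := hom_elt (dY (- 1) (- 1 + 1)) (hom_elt hG ex).
  apply: req_trans (req_add ef (req_opp (homD (dY _ _) (hom_elt hH0 ex) (hom_elt hG ex)))) _.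
  apply: req_trans (rsubDr ef eH eG) _.
  exact: rsubrr (Gc x cx).
Qed.

End RoofGe0.

Section Identity.
Context {R : pzRingType} (A : cplx R) (cA : is_complex A).

Lemma id_chain : is_chain (fun n (x : car (cobj A n)) => x).
Proof.
have [HA dA _ _] := cA.
by split=> [n|i j x ex]; [exact: hom_id|exact: (hom_elt (dA _ _) ex)].
Qed.

Lemma id_qiso : quasi_iso (fun n (x : car (cobj A n)) => x).
Proof.
have [HA _ _ _] := cA; move=> n; split=> // y [ey dy].
by exists y; split; [split|exact: boundary_eq0 cA (raddN ey)].
Qed.

End Identity.

Section ShiftedZeta.
Context {R : pzRingType} {Q0 Q1 : rmod R} {HQ0 : is_rmod Q0} {HQ1 : is_rmod Q1}.
Context (zeta : car Q0 -> car Q1) (hz : is_hom zeta).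
Context (injQ0 : injective_mod Q0) (injQ1 : injective_mod Q1).
Context (X : cplx R) (cX : is_complex X).

Let cZ i : is_complex (shift (zeta_cplx zeta) i).
Proof. exact/shift_complex/zeta_complex. Qed.

Lemma HomD_zero_trunc_le0_shift_zeta (i : int) :
  HomK_zero X (zeta_cplx zeta) -> i <= 0 ->
  HomD_zero (trunc_le0 X) (shift (zeta_cplx zeta) i).
Proof.
move=> hK i_le0 B s f cB cs cf qs; have tZ := two_term_shift_zeta zeta.
exists (trunc_le0 B), (trunc_incl B); split.
- exact: trunc_le0_complex.
- exact: trunc_incl_chain.
- exact: (trunc_incl_qiso cB (qiso_trunc_le0_exact cX cs qs)).
- apply: (trunc_le0_roof_null cB (cZ i) cf (tZ i)) => [|x [ex Px _]]; first lia.
  have [i0|i_neq0] := eqVneq i 0.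
    subst i; exact: (roof_le0_kills_cycles zeta hz injQ0 injQ1 X B cX cB s cs qs f cf hK
                       x (conj ex Px)).
  have [HB _ _ _] := cB; have [HZ _ _ _] := cZ i.
  have mi_gt0 : 0 < - i by lia.
  exact: (hom_eq0 (proj1 cf _) (le0_pred_pos (X := B) mi_gt0 Px)).
Qed.

Lemma HomD_zero_trunc_ge0_shift_zeta (i : int) :
  HomK_zero X (shift (zeta_cplx zeta) 1) -> 1 <= i ->
  HomD_zero (trunc_ge0 X) (shift (zeta_cplx zeta) i).
Proof.
move=> hK i_ge1 B s f cB cs cf qs; have tZ := two_term_shift_zeta zeta.
exists B, (fun n x => x); split; [exact: cB|exact: id_chain|exact: id_qiso|].
have [i1|i_neq1] := eqVneq i 1.
  subst i; exact: (roof_ge0_null X B _ cX cB (cZ 1) s cs qs (tZ 1) injQ1 f injQ0 hK cf).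
have exB := qiso_trunc_ge0_exact cX cs qs.
apply: (exact_two_term_null cB (cZ i) cf (tZ i)).
- by rewrite shift_zeta_obj0.
- by rewrite shift_zeta_obj1.
- by apply: exB; lia.
- by apply: exB; lia.
Qed.

End ShiftedZeta.

Theorem lemma2p9 (R : pzRingType) (Q0 Q1 : rmod R) (zeta : car Q0 -> car Q1)
    (X : cplx R) :
  is_rmod Q0 -> is_rmod Q1 -> injective_mod Q0 -> injective_mod Q1 ->
  is_hom zeta -> is_complex X ->
  (HomK_zero X (zeta_cplx zeta) ->
     forall i : int, i <= 0 -> HomD_zero (trunc_le0 X) (shift (zeta_cplx zeta) i)) /\
  (HomK_zero X (shift (zeta_cplx zeta) 1) ->
     forall i : int, 1 <= i -> HomD_zero (trunc_ge0 X) (shift (zeta_cplx zeta) i)).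
Proof.
move=> HQ0 HQ1 injQ0 injQ1 hz cX; split=> hK i.
- exact: (HomD_zero_trunc_le0_shift_zeta hz injQ0 injQ1 cX hK).
- exact: (HomD_zero_trunc_ge0_shift_zeta hz injQ0 injQ1 cX hK).
Qed.
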